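(* There is a dense $G_\delta$ set $G\subseteq\ell^2$ and a continuous function $f:G\to\{1,2\}^\omega$ such that: (i) $y\notin\mathsf{HC}(f(y))$ for each $y\in G$; (ii) $\mathsf{HC}(f(y))\neq\emptyset$ for each $y\in G$; and (iii) for each nonempty open $U\subseteq\ell^2$, the image $f[U\cap G]$ contains at least two elements.
   Context: $\omega=\{0,1,2,\dots\}$; $\ell^2$ is the Hilbert space of square-summable real sequences indexed by $\omega$ with its norm topology; $\{1,2\}^\omega$ has the product topology. For $w\in\{1,2\}^\omega$, $B_w:\ell^2\to\ell^2$ is $B_w(x)(i)=w(i)\,x(i+1)$, and $\mathsf{HC}(w)$ is the set of $x\in\ell^2$ such that $\{B_w^k(x):k\in\omega\}$ is dense in $\ell^2$. *)

From Stdlib Require Import Reals.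
From Coquelicot Require Import Coquelicot.
Open Scope R_scope.

Definition is_l2 (x : nat -> R) : Prop := ex_series (fun i => (x i) ^ 2).

(* The l^2 norm distance (meaningful for x y in l^2). *)
Definition l2_dist (x y : nat -> R) : R :=
  sqrt (Series (fun i => (x i - y i) ^ 2)).

Definition l2_open (U : (nat -> R) -> Prop) : Prop :=
  forall x, U x -> is_l2 x /\
    exists eps, 0 < eps /\ forall y, is_l2 y -> l2_dist x y < eps -> U y.

Definition l2_dense (D : (nat -> R) -> Prop) : Prop :=
  (forall x, D x -> is_l2 x) /\
  forall x, is_l2 x -> forall eps, 0 < eps -> exists y, D y /\ l2_dist x y < eps.

Definition l2_Gdelta (G : (nat -> R) -> Prop) : Prop :=
  exists Un : nat -> (nat -> R) -> Prop,
    (forall n, l2_open (Un n)) /\ forall x, G x <-> forall n, Un n x.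

(* Points of {1,2}^omega, as real-valued sequences with values in {1,2}. *)
Definition weight12 (w : nat -> R) : Prop := forall i, w i = 1 \/ w i = 2.

Definition Bw (w : nat -> R) (x : nat -> R) : nat -> R :=
  fun i => w i * x (S i).

Definition HC (w : nat -> R) (x : nat -> R) : Prop :=
  is_l2 x /\
  forall z, is_l2 z -> forall eps, 0 < eps ->
    exists k : nat, l2_dist (Nat.iter k (Bw w) x) z < eps.

(* Continuity of f : G -> {1,2}^omega, with {1,2}^omega carrying the product
   of discrete topologies (basic opens = cylinders fixing finitely many
   initial coordinates) and G the subspace topology from l^2. *)
Definition cont_G_to_Cantor (G : (nat -> R) -> Prop) (f : (nat -> R) -> nat -> R) : Prop :=
  forall y, G y -> forall n : nat, exists eps, 0 < eps /\
    forall z, G z -> l2_dist y z < eps -> forall i, (i < n)%nat -> f z i = f y i.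

From Stdlib Require Import Reals Lra Lia Classical ClassicalEpsilon Cantor ZArith List.
From Coquelicot Require Import Coquelicot.
Open Scope R_scope.

(* For [y] in l^2, [level y k] counts the steps [j <= k] at which the tail [sum_(i >= j) y_i^2]
   has dropped below the next threshold [4^-(level+1)], and [weight_of y] puts the weight 2
   exactly at those steps.  Then [prod_(i<k) w_i = 2^(level y k)] while
   [4^(level y k) * sum_(i >= k) y_i^2] stays bounded, so the coordinate [2^(level y k) y_k]
   of [B_w^k y] at 0 stays bounded and [y] is not hypercyclic.  As tails tend to 0 the level
   is unbounded, and a weighted backward shift with unbounded weight products has a
   hypercyclic vector, built block by block from a dense sequence.  The set [G] ([generic])
   of [y] none of whose tails equals a threshold is a dense G_delta on which each weight
   depends locally on finitely many continuous tails.  Any open set contains a finitely supported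
   [v] in [G] together with [v] modified at a far coordinate [N] where [level v N] is already
   large; equal weights for both would make [4^(level v N) s^2] bounded, which fails. *)

Fixpoint psum (h : nat -> R) (M : nat) : R :=
  match M with O => 0 | S M => psum h M + h M end.

Lemma psum_ext h h' M :
  (forall i, (i < M)%nat -> h i = h' i) -> psum h M = psum h' M.
Proof.
  induction M as [|M IH]; simpl; intros H; auto.
  rewrite IH by (intros; apply H; lia). rewrite H by lia; auto.
Qed.

Lemma psum_ge0 h M : (forall i, 0 <= h i) -> 0 <= psum h M.
Proof. intros H; induction M; simpl; [lra|specialize (H M); lra]. Qed.

Lemma psum_le h h' M :
  (forall i, (i < M)%nat -> h i <= h' i) -> psum h M <= psum h' M.
Proof.
  induction M as [|M IH]; simpl; intros H; [lra|].
  assert (psum h M <= psum h' M) by (apply IH; intros; apply H; lia).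
  specialize (H M ltac:(lia)); lra.
Qed.

Lemma psum_mono h M M' : (forall i, 0 <= h i) -> (M <= M')%nat -> psum h M <= psum h M'.
Proof. intros H L; induction L; simpl; [lra|]. specialize (H m); lra. Qed.

Lemma psum_scal c h M : psum (fun i => c * h i) M = c * psum h M.
Proof. induction M; simpl; [ring|]. rewrite IHM; ring. Qed.

Lemma psum_const c M : psum (fun _ => c) M = INR M * c.
Proof. induction M; simpl psum; [simpl; ring|]. rewrite IHM, S_INR; ring. Qed.

Lemma psum_add_len h a d : psum h (a + d) = psum h a + psum (fun i => h (a + i)%nat) d.
Proof.
  induction d; simpl; [rewrite Nat.add_0_r; ring|].
  rewrite Nat.add_succ_r; simpl. rewrite IHd; ring.
Qed.

Lemma psum_eq0 h M : (forall i, (i < M)%nat -> h i = 0) -> psum h M = 0.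
Proof.
  intros H. rewrite (psum_ext h (fun _ => 0)) by auto.
  rewrite psum_const; ring.
Qed.

Lemma psum_single h M k :
  (k < M)%nat -> (forall j, (j < M)%nat -> j <> k -> h j = 0) -> psum h M = h k.
Proof.
  induction M as [|M IH]; intros Hk H; [lia|]. simpl. destruct (Nat.eq_dec k M).
  - subst. rewrite psum_eq0; [ring|]. intros; apply H; lia.
  - rewrite IH by (try lia; intros; apply H; lia). rewrite (H M) by lia; ring.
Qed.

Lemma psum_geom_le q J : 0 <= q < 1 -> psum (fun j => q ^ j) J <= / (1 - q).
Proof.
  intros Hq.
  assert (E : psum (fun j => q ^ j) J = (1 - q ^ J) / (1 - q)).
  { induction J; simpl; [|rewrite IHJ]; field; lra. }
  rewrite E. assert (0 <= q ^ J) by (apply pow_le; lra).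
  unfold Rdiv. rewrite <- (Rmult_1_l (/ (1 - q))) at 2.
  apply Rmult_le_compat_r; [left; apply Rinv_0_lt_compat|]; lra.
Qed.

Lemma sum_f_R0_psum h n : sum_f_R0 h n = psum h (S n).
Proof. induction n; simpl; [ring|]. rewrite IHn; simpl; ring. Qed.

Lemma sum_n_psum h n : sum_n h n = psum h (S n).
Proof. rewrite sum_n_Reals. apply sum_f_R0_psum. Qed.

Lemma Series_ge0 h : (forall i, 0 <= h i) -> 0 <= Series h.
Proof.
  intros H. unfold Series.
  assert (L : Rbar_le (Lim_seq (fun _ => 0)) (Lim_seq (sum_n h))).
  { apply Lim_seq_le_loc. exists O; intros n _. rewrite sum_n_psum. apply psum_ge0, H. }
  rewrite Lim_seq_const in L. destruct (Lim_seq (sum_n h)); simpl in *; lra.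
Qed.

Lemma Series_bounded h B :
  (forall i, 0 <= h i) -> (forall M, psum h M <= B) -> ex_series h /\ Series h <= B.
Proof.
  intros H0 HB.
  assert (E : ex_finite_lim_seq (sum_n h)).
  { apply ex_finite_lim_seq_incr with B; intros n; rewrite !sum_n_psum; auto.
    simpl; specialize (H0 (S n)); lra. }
  destruct E as [l Hl].
  split; [exists l; exact Hl|].
  rewrite (is_series_unique h l Hl).
  assert (Rbar_le l B).
  { apply is_lim_seq_le with (sum_n h) (fun _ => B); auto.
    - intros n; rewrite sum_n_psum; auto.
    - apply is_lim_seq_const. }
  auto.
Qed.

Lemma ex_series_le_nonneg u v : (forall n, 0 <= u n <= v n) -> ex_series v -> ex_series u.
Proof.
  intros H. apply (@ex_series_le R_AbsRing R_CompleteNormedModule u v).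
  intros n. change (Rabs (u n) <= v n).
  rewrite Rabs_pos_eq; apply H.
Qed.

Lemma ex_series_lin u v c d :
  ex_series u -> ex_series v -> ex_series (fun n => c * u n + d * v n).
Proof.
  intros Hu Hv.
  apply (ex_series_plus (fun n => c * u n) (fun n => d * v n));
    [apply (ex_series_scal c u) | apply (ex_series_scal d v)]; auto.
Qed.

Lemma Series_finsupp h N :
  (forall i, (N <= i)%nat -> h i = 0) -> ex_series h /\ Series h = psum h N.
Proof.
  intros H.
  assert (S : is_series h (psum h N)).
  { apply is_series_Reals. intros eps Heps. exists N. intros n Hn.
    rewrite sum_f_R0_psum. unfold R_dist.
    replace (S n) with (N + (S n - N))%nat by lia.
    rewrite psum_add_len, (psum_eq0 _ (S n - N)) by (intros; apply H; lia).
    rewrite Rplus_0_r, Rminus_diag, Rabs_R0; auto. }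
  split; [exists (psum h N); exact S | apply is_series_unique, S].
Qed.

Lemma Series_split h N :
  ex_series h -> Series h = psum h N + Series (fun k => h (N + k)%nat).
Proof.
  intros He. destruct N as [|N].
  - simpl. rewrite Rplus_0_l. apply Series_ext; auto.
  - rewrite (Series_incr_n h (S N)), sum_f_R0_psum by (auto; lia). auto.
Qed.

Lemma Series_shift_le h N :
  (forall i, 0 <= h i) -> ex_series h -> Series (fun k => h (N + k)%nat) <= Series h.
Proof.
  intros H0 He. rewrite (Series_split h N) by auto.
  pose proof (psum_ge0 h N H0); lra.
Qed.

Lemma psum_le_Series h M : (forall i, 0 <= h i) -> ex_series h -> psum h M <= Series h.
Proof.
  intros H0 He. rewrite (Series_split h M) by auto.
  assert (0 <= Series (fun k => h (M + k)%nat)) by (apply Series_ge0; auto). lra.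
Qed.

Lemma Series_tail_small h :
  ex_series h -> forall eps, 0 < eps -> exists N, Series (fun k => h (N + k)%nat) < eps.
Proof.
  intros He eps Heps. pose proof (Series_correct _ He) as Hc. apply is_series_Reals in Hc.
  destruct (Hc eps Heps) as [N HN]. exists (S N). specialize (HN N ltac:(lia)).
  rewrite sum_f_R0_psum in HN. unfold R_dist in HN.
  rewrite (Series_split h (S N)) in HN by auto. apply Rabs_def2 in HN. lra.
Qed.

Lemma Rabs_Series_le u v :
  ex_series u -> ex_series v -> (forall n, Rabs (u n) <= v n) -> Rabs (Series u) <= Series v.
Proof.
  intros Hu Hv H.
  assert (Ha : ex_series (fun n => Rabs (u n))).
  { apply (ex_series_le_nonneg _ v); auto. intros n; split; [apply Rabs_pos | apply H]. }
  eapply Rle_trans; [apply Series_Rabs, Ha|].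
  apply Series_le; auto. intros n; split; [apply Rabs_pos | apply H].
Qed.

(** * Tails and distances in l^2 *)

Definition tail_sq (m : nat) (y : nat -> R) : R := Series (fun i => y (m + i)%nat ^ 2).

Definition dist2 (a b : nat -> R) : R := Series (fun i => (a i - b i) ^ 2).

Lemma sq_add_le p q : (p + q) ^ 2 <= 2 * p ^ 2 + 2 * q ^ 2.
Proof. pose proof (pow2_ge_0 (p - q)). nra. Qed.

Lemma is_l2_tail x m : is_l2 x -> ex_series (fun i => x (m + i)%nat ^ 2).
Proof. intros H. apply (ex_series_incr_n (fun i => x i ^ 2) m), H. Qed.

Lemma is_l2_finsupp v N : (forall i, (N <= i)%nat -> v i = 0) -> is_l2 v.
Proof. intros H. apply (Series_finsupp _ N). intros i Hi; rewrite H by auto; ring. Qed.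

Lemma ex_dist2 a b : is_l2 a -> is_l2 b -> ex_series (fun i => (a i - b i) ^ 2).
Proof.
  intros Ha Hb. apply ex_series_le_nonneg with (fun i => 2 * a i ^ 2 + 2 * b i ^ 2).
  - intros n; split; [apply pow2_ge_0|].
    replace (a n - b n) with (a n + - b n) by ring.
    eapply Rle_trans; [apply sq_add_le | right; ring].
  - apply ex_series_lin; auto.
Qed.

Lemma dist2_ge0 a b : 0 <= dist2 a b.
Proof. apply Series_ge0; intros; apply pow2_ge_0. Qed.

Lemma dist2_triangle a b c : is_l2 a -> is_l2 b -> is_l2 c ->
  dist2 a c <= 2 * dist2 a b + 2 * dist2 b c.
Proof.
  intros Ha Hb Hc. unfold dist2.
  rewrite <- !Series_scal_l, <- Series_plus
    by (apply (ex_series_scal_l (V := R_NormedModule)), ex_dist2; auto).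
  apply Series_le.
  - intros n; split; [apply pow2_ge_0|].
    replace (a n - c n) with ((a n - b n) + (b n - c n)) by ring. apply sq_add_le.
  - apply ex_series_lin; apply ex_dist2; auto.
Qed.

Lemma l2_dist_lt a b e : 0 < e -> l2_dist a b < e <-> dist2 a b < e ^ 2.
Proof.
  intros He. unfold l2_dist. fold (dist2 a b). pose proof (dist2_ge0 a b).
  split; intros H1.
  - pose proof (sqrt_sqrt (dist2 a b) H). pose proof (sqrt_pos (dist2 a b)). nra.
  - rewrite <- (sqrt_pow2 e) by lra. apply sqrt_lt_1; auto. apply pow2_ge_0.
Qed.

Lemma coord_le_l2_dist v z i : is_l2 v -> is_l2 z -> Rabs (v i - z i) <= l2_dist v z.
Proof.
  intros Hv Hz. unfold l2_dist. rewrite <- sqrt_Rsqr_abs. apply sqrt_le_1_alt.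
  eapply Rle_trans; [| apply (psum_le_Series _ (S i)); auto using ex_dist2].
  - cbn [psum]. pose proof (psum_ge0 (fun j => (v j - z j) ^ 2) i (fun j => pow2_ge_0 _)).
    replace (Rsqr (v i - z i)) with ((v i - z i) ^ 2) by (unfold Rsqr; ring). lra.
  - intros; apply pow2_ge_0.
Qed.

Lemma tail_sq_ge0 m y : 0 <= tail_sq m y.
Proof. apply Series_ge0; intros; apply pow2_ge_0. Qed.

Lemma tail_sq_S m y : is_l2 y -> tail_sq m y = y m ^ 2 + tail_sq (S m) y.
Proof.
  intros H. unfold tail_sq. rewrite Series_incr_1 by (apply is_l2_tail; auto).
  rewrite Nat.add_0_r. f_equal. apply Series_ext; intros; do 2 f_equal; lia.
Qed.

Lemma tail_sq_antimono m m' y : is_l2 y -> (m <= m')%nat -> tail_sq m' y <= tail_sq m y.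
Proof.
  intros H L; induction L; [lra|].
  rewrite (tail_sq_S m0 y H) in IHL. pose proof (pow2_ge_0 (y m0)); lra.
Qed.

Lemma sq_le_tail_sq m y : is_l2 y -> y m ^ 2 <= tail_sq m y.
Proof. intros H; rewrite (tail_sq_S m y H). pose proof (tail_sq_ge0 (S m) y); lra. Qed.

Lemma tail_sq_vanishes y : is_l2 y ->
  forall eps, 0 < eps -> exists N, forall m, (N <= m)%nat -> tail_sq m y < eps.
Proof.
  intros H eps He. destruct (Series_tail_small _ H eps He) as [N HN].
  exists N. intros m Hm. pose proof (tail_sq_antimono N m y H Hm). unfold tail_sq at 2 in H0. lra.
Qed.

Lemma tail_sq_finsupp v N m : (forall i, (N <= i)%nat -> v i = 0) ->
  tail_sq m v = psum (fun i => v (m + i)%nat ^ 2) (N - m).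
Proof. intros H. apply Series_finsupp. intros i Hi. rewrite H by lia; ring. Qed.

Lemma sq_diff_le a b lam : 0 < lam ->
  Rabs (b ^ 2 - a ^ 2) <= lam * a ^ 2 + (1 + / lam) * (a - b) ^ 2.
Proof.
  intros Hl. pose proof (Rinv_0_lt_compat _ Hl) as Hil.
  set (u := Rabs (b - a)); set (v := Rabs a).
  assert (Hu : 0 <= u) by apply Rabs_pos.
  assert (Hprod : Rabs (b ^ 2 - a ^ 2) <= 2 * u * v + u ^ 2).
  { replace (b ^ 2 - a ^ 2) with ((b - a) * (2 * a + (b - a))) by ring.
    rewrite Rabs_mult. fold u.
    assert (Rabs (2 * a + (b - a)) <= 2 * v + u).
    { eapply Rle_trans; [apply Rabs_triang|]. rewrite Rabs_mult, (Rabs_pos_eq 2) by lra.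
      unfold u, v; lra. }
    eapply Rle_trans; [apply Rmult_le_compat_l; eauto | right; ring]. }
  (* AM-GM: [lam (lam v^2 + u^2/lam - 2 u v) = (lam v - u)^2] *)
  assert (Hamgm : 2 * u * v <= lam * v ^ 2 + / lam * u ^ 2).
  { assert (E : lam * (lam * v ^ 2 + / lam * u ^ 2 - 2 * u * v) = (lam * v - u) ^ 2)
      by (field; lra).
    pose proof (pow2_ge_0 (lam * v - u)).
    apply Rmult_le_reg_l with lam; auto. nra. }
  assert (Ea : v ^ 2 = a ^ 2) by apply pow2_abs.
  assert (Eu : u ^ 2 = (a - b) ^ 2) by (unfold u; rewrite pow2_abs; ring).
  rewrite Ea, Eu in Hamgm. lra.
Qed.

Lemma tail_sq_continuous y : is_l2 y -> forall d, 0 < d -> exists e, 0 < e /\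
  forall z, is_l2 z -> dist2 y z < e -> forall m, Rabs (tail_sq m z - tail_sq m y) < d.
Proof.
  intros Hy d Hd. pose proof (tail_sq_ge0 0 y) as HM. set (M := tail_sq 0 y) in HM.
  set (lam := d / (2 * (M + 1))).
  assert (Hl : 0 < lam) by (unfold lam; apply Rdiv_lt_0_compat; lra).
  pose proof (Rinv_0_lt_compat _ Hl) as Hil.
  exists (d / (2 * (1 + / lam))). split; [apply Rdiv_lt_0_compat; lra|].
  intros z Hz HD m.
  set (D := fun i => (y (m + i)%nat - z (m + i)%nat) ^ 2).
  assert (ExD : ex_series D)
    by (apply (ex_series_incr_n (fun i => (y i - z i) ^ 2)), ex_dist2; auto).
  assert (HDm : Series D <= dist2 y z)
    by (apply (Series_shift_le (fun i => (y i - z i) ^ 2));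
        [intros; apply pow2_ge_0 | apply ex_dist2; auto]).
  assert (HTy : tail_sq m y <= M) by (apply tail_sq_antimono; auto; lia).
  unfold tail_sq. rewrite <- Series_minus by (apply is_l2_tail; auto).
  eapply Rle_lt_trans.
  { apply Rabs_Series_le with (v := fun i => lam * y (m + i)%nat ^ 2 + (1 + / lam) * D i).
    - apply (ex_series_minus (fun i => z (m + i)%nat ^ 2) (fun i => y (m + i)%nat ^ 2));
        apply is_l2_tail; auto.
    - apply ex_series_lin; auto. apply is_l2_tail; auto.
    - intros n. apply sq_diff_le; auto. }
  rewrite Series_plus, !Series_scal_l
    by (apply (ex_series_scal_l (V := R_NormedModule)); auto; apply is_l2_tail; auto).
  fold (tail_sq m y).
  assert (lam * tail_sq m y <= d / 2).
  { apply Rle_trans with (lam * (M + 1)); [apply Rmult_le_compat_l; lra|].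
    right; unfold lam; field; lra. }
  assert ((1 + / lam) * Series D < d / 2).
  { apply Rle_lt_trans with ((1 + / lam) * dist2 y z); [apply Rmult_le_compat_l; lra|].
    apply Rlt_le_trans with ((1 + / lam) * (d / (2 * (1 + / lam)))).
    - apply Rmult_lt_compat_l; lra.
    - right; field; lra. }
  lra.
Qed.

Lemma tail_sq_same_side m y c : is_l2 y -> tail_sq m y <> c ->
  exists e, 0 < e /\ forall z, is_l2 z -> l2_dist y z < e ->
    (tail_sq m z < c /\ tail_sq m y < c) \/ (c < tail_sq m z /\ c < tail_sq m y).
Proof.
  intros Hy Hc. set (d := Rabs (tail_sq m y - c)).
  assert (Hd : 0 < d) by (apply Rabs_pos_lt; lra).
  destruct (tail_sq_continuous y Hy d Hd) as [e [He Hcont]].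
  exists (sqrt e). split; [apply sqrt_lt_R0; auto|]. intros z Hz Hdist.
  apply l2_dist_lt in Hdist; [|apply sqrt_lt_R0; auto]. rewrite pow2_sqrt in Hdist by lra.
  specialize (Hcont z Hz Hdist m). unfold d in Hcont. apply Rabs_def2 in Hcont.
  destruct (Rlt_dec (tail_sq m y) c) as [L|L].
  - rewrite (Rabs_left (tail_sq m y - c)) in Hcont by lra. lra.
  - rewrite (Rabs_pos_eq (tail_sq m y - c)) in Hcont by lra. lra.
Qed.

(** * Weighted backward shifts and a dense sequence *)

Fixpoint wprod (w : nat -> R) (k : nat) : R :=
  match k with O => 1 | S k => wprod w k * w k end.

Lemma wprod_ge1 w k : weight12 w -> 1 <= wprod w k.
Proof. intros Hw; induction k; simpl; [lra|]. destruct (Hw k) as [E|E]; rewrite E; lra. Qed.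

Lemma wprod_mono w k k' : weight12 w -> (k <= k')%nat -> wprod w k <= wprod w k'.
Proof.
  intros Hw L; induction L; simpl; [lra|].
  pose proof (wprod_ge1 w m Hw). destruct (Hw m) as [E|E]; rewrite E; lra.
Qed.

Lemma Bw_iter w x n i : weight12 w ->
  Nat.iter n (Bw w) x i = wprod w (i + n) / wprod w i * x (i + n)%nat.
Proof.
  intros Hw. pose proof (wprod_ge1 w i Hw). revert i H; induction n as [|n IH]; intros i Hi.
  - simpl. rewrite Nat.add_0_r. field. lra.
  - simpl Nat.iter. unfold Bw at 1. rewrite IH by apply wprod_ge1, Hw.
    replace (S i + n)%nat with (i + S n)%nat by lia. simpl wprod.
    assert (w i <> 0) by (destruct (Hw i) as [E|E]; rewrite E; lra).
    field; split; auto; lra.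
Qed.

Lemma Bw_l2 w x : weight12 w -> is_l2 x -> is_l2 (Bw w x).
Proof.
  intros Hw Hx. unfold is_l2, Bw. apply ex_series_le_nonneg with (fun i => 4 * x (S i) ^ 2).
  - intros n; split; [apply pow2_ge_0|]. destruct (Hw n) as [E|E]; rewrite E; nra.
  - apply (ex_series_scal_l (V := R_NormedModule)), (ex_series_incr_1 (fun i => x i ^ 2)), Hx.
Qed.

Lemma Bw_iter_l2 w x k : weight12 w -> is_l2 x -> is_l2 (Nat.iter k (Bw w) x).
Proof. intros Hw Hx; induction k; simpl; auto. apply Bw_l2; auto. Qed.

Lemma four_pow p : 4 ^ p = (2 ^ p) ^ 2.
Proof. rewrite <- pow_mult, Nat.mul_comm, pow_mult. f_equal; ring. Qed.

Lemma INR_le_pow2 p : INR p <= 2 ^ p.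
Proof.
  induction p; [simpl; lra|]. rewrite S_INR. simpl.
  assert (1 <= 2 ^ p) by (apply pow_R1_Rle; lra). lra.
Qed.

(* [dyadic_vec a] enumerates the finitely supported vectors whose first [N] coordinates lie in
   [2^-N Z] and whose others vanish: [a] codes the pair of [N] and a code [c] for the stream of
   numerators, integers being coded as differences of two naturals. *)
Definition int_of_nat (e : nat) : R := INR (fst (of_nat e)) - INR (snd (of_nat e)).

Fixpoint nat_stream (c i : nat) : nat :=
  match i with O => fst (of_nat c) | S i => nat_stream (snd (of_nat c)) i end.

Definition dyadic_len (a : nat) : nat := fst (of_nat a).

Definition dyadic_vec (a i : nat) : R :=
  if Nat.ltb i (dyadic_len a)
  then int_of_nat (nat_stream (snd (of_nat a)) i) / 2 ^ dyadic_len a else 0.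

Lemma nat_stream_prefix N : forall g : nat -> nat,
  exists c, forall i, (i < N)%nat -> nat_stream c i = g i.
Proof.
  induction N as [|N IH]; intros g; [exists O; intros; lia|].
  destruct (IH (fun i => g (S i))) as [c Hc]. exists (to_nat (g O, c)).
  intros [|i] Hi; cbn [nat_stream]; rewrite cancel_of_to; auto. apply Hc; lia.
Qed.

Lemma int_of_nat_IZR z : int_of_nat (to_nat (Z.to_nat z, Z.to_nat (- z))) = IZR z.
Proof.
  unfold int_of_nat. rewrite cancel_of_to. simpl.
  rewrite !INR_IZR_INZ, <- minus_IZR. f_equal. lia.
Qed.

Lemma dyadic_vec_supp a i : (dyadic_len a <= i)%nat -> dyadic_vec a i = 0.
Proof. intros H; unfold dyadic_vec. destruct (Nat.ltb_spec i (dyadic_len a)); [lia|auto]. Qed.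

Lemma dyadic_vec_l2 a : is_l2 (dyadic_vec a).
Proof. apply (is_l2_finsupp _ (dyadic_len a)), dyadic_vec_supp. Qed.

Lemma dyadic_vec_round (z : nat -> R) N : exists a, dyadic_len a = N /\
  forall i, (i < N)%nat -> Rabs (dyadic_vec a i - z i) <= / 2 ^ N.
Proof.
  assert (P2 : 0 < 2 ^ N) by (apply pow_lt; lra).
  set (num := fun i => up (z i * 2 ^ N)).
  destruct (nat_stream_prefix N (fun i => to_nat (Z.to_nat (num i), Z.to_nat (- num i))))
    as [c Hc].
  exists (to_nat (N, c)). unfold dyadic_vec, dyadic_len. rewrite cancel_of_to. simpl.
  split; auto. intros i Hi. destruct (Nat.ltb_spec i N); [|lia].
  rewrite Hc, int_of_nat_IZR by auto. destruct (archimed (z i * 2 ^ N)) as [A B].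
  fold (num i) in A, B.
  replace (IZR (num i) / 2 ^ N - z i) with ((IZR (num i) - z i * 2 ^ N) * / 2 ^ N)
    by (field; lra).
  rewrite Rabs_mult, Rabs_pos_eq, (Rabs_pos_eq (/ 2 ^ N)) by
    (try (left; apply Rinv_0_lt_compat); lra).
  rewrite <- (Rmult_1_l (/ 2 ^ N)) at 2.
  apply Rmult_le_compat_r; [left; apply Rinv_0_lt_compat|]; lra.
Qed.

Lemma dyadic_vec_dense z : is_l2 z ->
  forall eps, 0 < eps -> exists a, dist2 (dyadic_vec a) z < eps.
Proof.
  intros Hz eps He.
  destruct (tail_sq_vanishes z Hz (eps / 2) ltac:(lra)) as [N1 H1].
  destruct (pow_lt_1_zero (/ 2) ltac:(rewrite Rabs_pos_eq; lra) (eps / 2) ltac:(lra))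
    as [N2 H2].
  set (N := Nat.max N1 N2). specialize (H1 N ltac:(lia)). specialize (H2 N ltac:(lia)).
  rewrite pow_inv, Rabs_pos_eq in H2 by (left; apply Rinv_0_lt_compat, pow_lt; lra).
  destruct (dyadic_vec_round z N) as [a [Ha Hround]]. exists a.
  unfold dist2. rewrite (Series_split _ N) by (apply ex_dist2; auto using dyadic_vec_l2).
  assert (Htail : Series (fun k => (dyadic_vec a (N + k)%nat - z (N + k)%nat) ^ 2)
                  = tail_sq N z).
  { apply Series_ext. intros k. rewrite dyadic_vec_supp by lia. ring. }
  assert (Hhead : psum (fun i => (dyadic_vec a i - z i) ^ 2) N <= / 2 ^ N).
  { apply Rle_trans with (psum (fun _ => / 4 ^ N) N).
    - apply psum_le. intros i Hi.
      replace (/ 4 ^ N) with ((/ 2 ^ N) ^ 2) by (rewrite four_pow, pow_inv; auto).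
      rewrite <- pow2_abs. apply pow_incr. split; [apply Rabs_pos | auto].
    - rewrite psum_const, four_pow. pose proof (INR_le_pow2 N).
      assert (0 < 2 ^ N) by (apply pow_lt; lra).
      replace (/ 2 ^ N) with (2 ^ N * / (2 ^ N) ^ 2) by (field; lra).
      apply Rmult_le_compat_r; auto. left; apply Rinv_0_lt_compat, pow_lt; lra. }
  lra.
Qed.

(** * Hypercyclic vectors for unbounded weight products *)

Lemma Series_blocks_le (h : nat -> R) (a L : nat -> nat) (c : R) : 0 <= c ->
  (forall i, 0 <= h i) ->
  (forall j, (j <= a j)%nat) -> (forall j, (a j + L j <= a (S j))%nat) ->
  (forall i, (i < a 0%nat)%nat -> h i = 0) ->
  (forall j i, (a j + L j <= i)%nat -> (i < a (S j))%nat -> h i = 0) ->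
  (forall j, psum (fun l => h (a j + l)%nat) (L j) <= c * (/ 4) ^ j) ->
  ex_series h /\ Series h <= c * (4 / 3).
Proof.
  intros Hc H0 Hj Ha Hb Hg Hs.
  assert (Upto : forall j, psum h (a j) <= c * psum (fun j => (/ 4) ^ j) j).
  { induction j as [|j IH]; simpl; [rewrite psum_eq0 by auto; lra|].
    replace (a (S j)) with (a j + L j + (a (S j) - a j - L j))%nat by (specialize (Ha j); lia).
    rewrite !psum_add_len, (psum_eq0 (fun i => h (a j + L j + i)%nat))
      by (intros i Hi; apply (Hg j); lia).
    specialize (Hs j). lra. }
  apply Series_bounded; auto. intros M.
  eapply Rle_trans; [apply (psum_mono h M (a M)); auto|].
  eapply Rle_trans; [apply Upto|].
  apply Rmult_le_compat_l; auto.
  eapply Rle_trans; [apply psum_geom_le; lra | right; field].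
Qed.

Section HypercyclicVector.

Variables (w : nat -> R) (D : nat -> nat -> R) (len gap : nat -> nat).
Hypothesis Hw : weight12 w.
Hypothesis D_supp : forall k i, (len k <= i)%nat -> D k i = 0.
Hypothesis gap_gt : forall k, (k < gap k)%nat.
Hypothesis gap_large : forall k,
  4 ^ k * psum (fun l => (D k l * wprod w l) ^ 2) (len k) <= wprod w (gap k).

Fixpoint block_start (k : nat) : nat :=
  match k with O => gap O | S k => (block_start k + len k + gap (S k))%nat end.

Definition in_block (k i : nat) : Prop := (block_start k <= i < block_start k + len k)%nat.

Definition block_term (k i : nat) : R :=
  if (Nat.leb (block_start k) i && Nat.ltb i (block_start k + len k))%bool
  then D k (i - block_start k)%nat * wprod w (i - block_start k)%nat / wprod w i else 0.

(* Block [k] holds a preimage of [D k] under [B_w ^ block_start k]; as [block_start k > k],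
   the block containing [i] has index at most [i]. *)
Definition hc_vec (i : nat) : R := psum (fun k => block_term k i) (S i).

Lemma block_start_ge k : (gap k <= block_start k)%nat.
Proof. destruct k; simpl; lia. Qed.

Lemma block_start_gap j k : (j < k)%nat ->
  (block_start j + len j + gap k <= block_start k)%nat.
Proof.
  induction k as [|k IH]; intros H; [lia|]. simpl.
  destruct (Nat.eq_dec j k); [subst; lia|]. specialize (IH ltac:(lia)). lia.
Qed.

Lemma block_start_mono j k : (j <= k)%nat -> (block_start j <= block_start k)%nat.
Proof.
  intros H. destruct (Nat.eq_dec j k); [subst; lia|].
  pose proof (block_start_gap j k ltac:(lia)); lia.
Qed.

Lemma in_block_unique j k i : in_block j i -> in_block k i -> j = k.
Proof.
  unfold in_block; intros A B. destruct (Nat.lt_total j k) as [L|[E|L]]; auto.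
  - pose proof (block_start_gap j k L); lia.
  - pose proof (block_start_gap k j L); lia.
Qed.

Lemma not_in_block_gap j i : (block_start j + len j <= i)%nat ->
  (i < block_start (S j))%nat -> forall k, ~ in_block k i.
Proof.
  unfold in_block; intros A B k C. destruct (Nat.lt_total k j) as [L|[E|L]].
  - pose proof (block_start_gap k j L); lia.
  - subst; lia.
  - pose proof (block_start_mono (S j) k L); lia.
Qed.

Lemma not_in_block_before i : (i < block_start 0)%nat -> forall k, ~ in_block k i.
Proof. unfold in_block; intros A k C. pose proof (block_start_mono 0 k ltac:(lia)); lia. Qed.

Lemma hc_vec_in k i : in_block k i ->
  hc_vec i = D k (i - block_start k)%nat * wprod w (i - block_start k)%nat / wprod w i.
Proof.
  intros H. unfold hc_vec. rewrite (psum_single _ _ k).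
  - unfold in_block, block_term in *.
    destruct (Nat.leb_spec (block_start k) i), (Nat.ltb_spec i (block_start k + len k));
      simpl; auto; lia.
  - pose proof (gap_gt k); pose proof (block_start_ge k); unfold in_block in H; lia.
  - intros j _ Hj. unfold block_term.
    destruct (Nat.leb_spec (block_start j) i), (Nat.ltb_spec i (block_start j + len j));
      simpl; auto.
    exfalso. apply Hj, (in_block_unique j k i); auto. unfold in_block; lia.
Qed.

Lemma hc_vec_out i : (forall k, ~ in_block k i) -> hc_vec i = 0.
Proof.
  intros H. apply psum_eq0. intros k _. unfold block_term.
  destruct (Nat.leb_spec (block_start k) i), (Nat.ltb_spec i (block_start k + len k));
    simpl; auto.
  exfalso; apply (H k); unfold in_block; lia.
Qed.

Lemma block_sq_sum_le j m : (gap j <= m)%nat ->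
  psum (fun l => (D j l * wprod w l / wprod w (m + l)%nat) ^ 2) (len j) <= (/ 4) ^ j.
Proof.
  intros Hm. set (E := psum (fun l => (D j l * wprod w l) ^ 2) (len j)).
  set (Q := wprod w (gap j)). pose proof (gap_large j) as HQ. fold E Q in HQ.
  assert (Q1 : 1 <= Q) by apply wprod_ge1, Hw.
  assert (E0 : 0 <= E) by (apply psum_ge0; intros; apply pow2_ge_0).
  assert (P4 : 0 < 4 ^ j) by (apply pow_lt; lra).
  apply Rle_trans with (psum (fun l => / Q ^ 2 * (D j l * wprod w l) ^ 2) (len j)).
  - apply psum_le. intros l _. set (p := D j l * wprod w l).
    assert (Hq : Q <= wprod w (m + l)) by (apply wprod_mono; auto; lia).
    replace ((p / wprod w (m + l)) ^ 2) with (/ wprod w (m + l) ^ 2 * p ^ 2) by (field; lra).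
    apply Rmult_le_compat_r; [apply pow2_ge_0|].
    apply Rinv_le_contravar; [apply pow_lt; lra | apply pow_incr; lra].
  - rewrite psum_scal. fold E. rewrite pow_inv.
    (* [4^j E <= Q <= Q^2] *)
    apply Rmult_le_reg_l with (Q ^ 2 * 4 ^ j); [apply Rmult_lt_0_compat; nra|].
    replace (Q ^ 2 * 4 ^ j * (/ Q ^ 2 * E)) with (4 ^ j * E) by (field; lra).
    replace (Q ^ 2 * 4 ^ j * / 4 ^ j) with (Q ^ 2) by (field; lra). nra.
Qed.

Lemma hc_vec_l2 : is_l2 hc_vec.
Proof.
  destruct (Series_blocks_le (fun i => hc_vec i ^ 2) block_start len 1) as [A _]; auto; try lra.
  - intros; apply pow2_ge_0.
  - intros j; pose proof (gap_gt j); pose proof (block_start_ge j); lia.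
  - intros j; simpl; lia.
  - intros i Hi. rewrite hc_vec_out by (apply not_in_block_before; auto). ring.
  - intros j i A B. rewrite hc_vec_out by (eapply not_in_block_gap; eauto). ring.
  - intros j. rewrite Rmult_1_l.
    rewrite (psum_ext _ (fun l => (D j l * wprod w l / wprod w (block_start j + l)%nat) ^ 2)).
    + apply block_sq_sum_le, block_start_ge.
    + intros l Hl. rewrite (hc_vec_in j) by (unfold in_block; lia).
      replace (block_start j + l - block_start j)%nat with l by lia. auto.
Qed.

Section Orbit.

Variable k : nat.

Let P := block_start k.

Definition orbit_err (i : nat) : R := (Nat.iter P (Bw w) hc_vec i - D k i) ^ 2.

Lemma block_start_after j : (P + len k + gap (S k + j) <= block_start (S k + j))%nat.
Proof. apply block_start_gap; lia. Qed.

Lemma orbit_err_head i : (i < block_start (S k) - P)%nat -> orbit_err i = 0.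
Proof.
  intros Hi. unfold orbit_err. rewrite Bw_iter by auto.
  destruct (Nat.lt_ge_cases i (len k)) as [L|L].
  - rewrite (hc_vec_in k) by (unfold in_block, P in *; lia).
    replace (i + P - block_start k)%nat with i by (unfold P; lia).
    pose proof (wprod_ge1 w i Hw). pose proof (wprod_ge1 w (i + P) Hw).
    replace (wprod w (i + P) / wprod w i * (D k i * wprod w i / wprod w (i + P)) - D k i)
      with 0 by (field; lra).
    simpl; ring.
  - rewrite D_supp, hc_vec_out; [simpl; ring | | auto].
    apply (not_in_block_gap k); unfold P in *; simpl in *; lia.
Qed.

Lemma orbit_err_block j l : (l < len (S k + j))%nat ->
  orbit_err (block_start (S k + j) - P + l) =
  (D (S k + j) l * wprod w l / wprod w (block_start (S k + j) - P + l)%nat) ^ 2.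
Proof.
  intros Hl. pose proof (block_start_after j). unfold orbit_err. rewrite Bw_iter by auto.
  rewrite (D_supp k) by lia.
  rewrite (hc_vec_in (S k + j)) by (unfold in_block; lia).
  replace (block_start (S k + j) - P + l + P - block_start (S k + j))%nat with l by lia.
  replace (block_start (S k + j) - P + l + P)%nat with (block_start (S k + j) + l)%nat by lia.
  pose proof (wprod_ge1 w (block_start (S k + j) - P + l) Hw).
  pose proof (wprod_ge1 w (block_start (S k + j) + l) Hw).
  f_equal. field. lra.
Qed.

Lemma orbit_err_gap j i :
  (block_start (S k + j) - P + len (S k + j) <= i)%nat ->
  (i < block_start (S (S k + j)) - P)%nat -> orbit_err i = 0.
Proof.
  intros A B. pose proof (block_start_after j). unfold orbit_err. rewrite Bw_iter by auto.
  rewrite (D_supp k), hc_vec_out; [simpl; ring | | lia].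
  apply (not_in_block_gap (S k + j)); lia.
Qed.

Lemma hc_vec_orbit : dist2 (Nat.iter P (Bw w) hc_vec) (D k) <= (/ 4) ^ k.
Proof.
  destruct (Series_blocks_le orbit_err (fun j => block_start (S k + j) - P)%nat
    (fun j => len (S k + j)) ((/ 4) ^ S k)) as [_ B].
  - apply pow_le; lra.
  - intros; apply pow2_ge_0.
  - intros j. pose proof (block_start_after j). pose proof (gap_gt (S k + j)). lia.
  - intros j. pose proof (block_start_gap (S k + j) (S k + S j) ltac:(lia)).
    pose proof (block_start_after j). lia.
  - intros i Hi. apply orbit_err_head. rewrite Nat.add_0_r in Hi. auto.
  - intros j i A B. apply (orbit_err_gap j); auto. rewrite Nat.add_succ_r in B. auto.
  - intros j. rewrite <- pow_add.
    rewrite (psum_ext _ (fun l => (D (S k + j) l * wprod w l /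
                                   wprod w (block_start (S k + j) - P + l)%nat) ^ 2))
      by (intros; apply orbit_err_block; auto).
    apply block_sq_sum_le. pose proof (block_start_after j). lia.
  - eapply Rle_trans; [exact B|]. simpl. pose proof (pow_le (/ 4) k ltac:(lra)). lra.
Qed.

End Orbit.

End HypercyclicVector.

Theorem HC_exists_of_unbounded w : weight12 w ->
  (forall M, exists k, M <= wprod w k) -> exists x, HC w x.
Proof.
  intros Hw Hu.
  (* [D k] runs through every dyadic vector [dyadic_vec a], at all indices [to_nat (a, b)]. *)
  set (D := fun k => dyadic_vec (fst (of_nat k))).
  set (len := fun k => dyadic_len (fst (of_nat k))).
  assert (Hgap : forall k, {g : nat | (k < g)%nat /\
    4 ^ k * psum (fun l => (D k l * wprod w l) ^ 2) (len k) <= wprod w g}).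
  { intros k. apply constructive_indefinite_description.
    destruct (Hu (4 ^ k * psum (fun l => (D k l * wprod w l) ^ 2) (len k))) as [g0 H0].
    exists (Nat.max g0 (S k)). split; [lia|].
    eapply Rle_trans; [exact H0 | apply wprod_mono; auto; lia]. }
  set (gap := fun k => proj1_sig (Hgap k)).
  assert (Hsupp : forall k i, (len k <= i)%nat -> D k i = 0)
    by (intros; apply dyadic_vec_supp; auto).
  assert (Hgt : forall k, (k < gap k)%nat) by (intros k; apply (proj2_sig (Hgap k))).
  assert (Hlarge : forall k, 4 ^ k * psum (fun l => (D k l * wprod w l) ^ 2) (len k)
                             <= wprod w (gap k)) by (intros k; apply (proj2_sig (Hgap k))).
  set (x := hc_vec w D len gap).
  assert (Hx : is_l2 x) by (apply hc_vec_l2; auto).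
  exists x. split; auto. intros z Hz eps He.
  assert (He2 : 0 < eps ^ 2 / 4) by (pose proof (pow_lt eps 2 He); lra).
  destruct (dyadic_vec_dense z Hz _ He2) as [a Ha].
  destruct (pow_lt_1_zero (/ 4) ltac:(rewrite Rabs_pos_eq; lra) _ He2) as [b Hb].
  set (k := to_nat (a, b)).
  specialize (Hb k ltac:(pose proof (to_nat_non_decreasing a b); unfold k; lia)).
  rewrite Rabs_pos_eq in Hb by (apply pow_le; lra).
  assert (Dk : D k = dyadic_vec a) by (unfold D, k; rewrite cancel_of_to; auto).
  pose proof (hc_vec_orbit w D len gap Hw Hsupp Hgt Hlarge k) as Hk. rewrite Dk in Hk.
  exists (block_start len gap k). apply l2_dist_lt; auto.
  pose proof (dist2_triangle _ (dyadic_vec a) z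
    (Bw_iter_l2 w x (block_start len gap k) Hw Hx) (dyadic_vec_l2 a) Hz).
  fold x in Hk. lra.
Qed.

(** * The weights attached to a point *)

Definition thresh (p : nat) : R := / 4 ^ p.

Lemma thresh_pos p : 0 < thresh p.
Proof. apply Rinv_0_lt_compat, pow_lt; lra. Qed.

Lemma thresh_antimono p q : (p <= q)%nat -> thresh q <= thresh p.
Proof.
  intros L. apply Rinv_le_contravar; [apply pow_lt; lra|].
  apply Rle_pow; [lra | auto].
Qed.

Lemma thresh_below a : 0 < a -> exists K, thresh K <= a.
Proof.
  intros Ha. destruct (pow_lt_1_zero (/ 4) ltac:(rewrite Rabs_pos_eq; lra) a Ha) as [K HK].
  exists K. specialize (HK K ltac:(lia)). unfold thresh. rewrite <- pow_inv.
  rewrite Rabs_pos_eq in HK by (apply pow_le; lra). lra.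
Qed.

Fixpoint level (y : nat -> R) (k : nat) : nat :=
  match k with
  | O => O
  | S k => if Rlt_dec (tail_sq (S k) y) (thresh (S (level y k))) then S (level y k) else level y k
  end.

Definition weight_of (y : nat -> R) (k : nat) : R :=
  if Rlt_dec (tail_sq (S k) y) (thresh (S (level y k))) then 2 else 1.

Definition generic (y : nat -> R) : Prop := is_l2 y /\ forall m p, tail_sq m y <> thresh p.

Lemma weight_of_cases y k :
  (weight_of y k = 2 /\ level y (S k) = S (level y k)) \/
  (weight_of y k = 1 /\ level y (S k) = level y k).
Proof. unfold weight_of; simpl. destruct Rlt_dec; auto. Qed.

Lemma weight_of_12 y : weight12 (weight_of y).
Proof. intros k. destruct (weight_of_cases y k) as [[E _]|[E _]]; auto. Qed.

Lemma level_of_weight_of y y' : weight_of y = weight_of y' -> forall k, level y k = level y' k.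
Proof.
  intros E k; induction k as [|k IH]; auto.
  destruct (weight_of_cases y k) as [[A B]|[A B]], (weight_of_cases y' k) as [[A' B']|[A' B']];
    rewrite E in A; lra || lia.
Qed.

Lemma wprod_weight_of y k : wprod (weight_of y) k = 2 ^ level y k.
Proof.
  induction k as [|k IH]; auto. simpl wprod. rewrite IH.
  destruct (weight_of_cases y k) as [[A B]|[A B]]; rewrite A, B; simpl; ring.
Qed.

Lemma level_mono y k k' : (k <= k')%nat -> (level y k <= level y k')%nat.
Proof.
  intros L; induction L; auto.
  destruct (weight_of_cases y m) as [[_ B]|[_ B]]; lia.
Qed.

Lemma level_tail_bound y k : is_l2 y -> 4 ^ level y k * tail_sq k y <= Rmax (tail_sq 0 y) 1.
Proof.
  intros Hy; induction k as [|k IH].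
  - simpl. rewrite Rmult_1_l. apply Rmax_l.
  - simpl level. destruct Rlt_dec as [L|L].
    + assert (4 ^ S (level y k) * tail_sq (S k) y < 1).
      { apply Rlt_le_trans with (4 ^ S (level y k) * thresh (S (level y k))).
        - apply Rmult_lt_compat_l; auto. apply pow_lt; lra.
        - unfold thresh. rewrite Rinv_r; [lra | apply pow_nonzero; lra]. }
      pose proof (Rmax_r (tail_sq 0 y) 1); lra.
    + pose proof (tail_sq_antimono k (S k) y Hy ltac:(lia)).
      assert (0 < 4 ^ level y k) by (apply pow_lt; lra).
      eapply Rle_trans; [|exact IH]. apply Rmult_le_compat_l; lra.
Qed.

Lemma orbit_coord0_bound y k : is_l2 y ->
  Rabs (Nat.iter k (Bw (weight_of y)) y 0%nat) <= Rmax (tail_sq 0 y) 1.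
Proof.
  intros Hy.
  assert (E : Nat.iter k (Bw (weight_of y)) y 0%nat = 2 ^ level y k * y k).
  { rewrite Bw_iter, !wprod_weight_of by apply weight_of_12. simpl. field. }
  rewrite E. set (M := Rmax (tail_sq 0 y) 1).
  assert (Hq2 : (2 ^ level y k * y k) ^ 2 <= M).
  { rewrite Rpow_mult_distr, <- four_pow.
    eapply Rle_trans; [|apply level_tail_bound; auto].
    apply Rmult_le_compat_l; [apply pow_le; lra | apply sq_le_tail_sq; auto]. }
  assert (1 <= M) by apply Rmax_r.
  rewrite <- (Rabs_pos_eq M) by lra. apply Rsqr_le_abs_0. unfold Rsqr. nra.
Qed.

Lemma not_HC_weight_of y : is_l2 y -> ~ HC (weight_of y) y.
Proof.
  intros Hy [_ H]. set (M := Rmax (tail_sq 0 y) 1).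
  set (z := fun i : nat => if Nat.eq_dec i 0 then M + 1 else 0).
  assert (Hz : is_l2 z) by (apply (is_l2_finsupp z 1); intros i Hi; unfold z;
                            destruct Nat.eq_dec; [lia | auto]).
  destruct (H z Hz 1 ltac:(lra)) as [k Hk].
  pose proof (coord_le_l2_dist _ z 0 (Bw_iter_l2 _ _ k (weight_of_12 y) Hy) Hz) as C.
  pose proof (orbit_coord0_bound y k Hy) as B. fold M in B.
  change (z 0%nat) with (M + 1) in C.
  assert (Rabs (Nat.iter k (Bw (weight_of y)) y 0%nat - (M + 1)) < 1) as D by lra.
  apply Rabs_le_between in B. apply Rabs_def2 in D. lra.
Qed.

Lemma level_unbounded y : is_l2 y -> forall P, exists k, (P <= level y k)%nat.
Proof.
  intros Hy.
  assert (Inc : forall k, exists k', (k <= k')%nat /\ level y (S k') = S (level y k')).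
  { intros k. destruct (tail_sq_vanishes y Hy (thresh (S (level y k))) (thresh_pos _)) as [N HN].
    apply NNPP; intros Hn.
    assert (Stuck : forall k', (k <= k')%nat -> level y k' = level y k).
    { intros k' L; induction L; auto.
      destruct (weight_of_cases y m) as [[_ B]|[_ B]]; [|lia].
      exfalso; apply Hn; exists m; split; auto. }
    apply Hn. exists (N + k)%nat. split; [lia|]. simpl.
    rewrite (Stuck (N + k)%nat) by lia.
    destruct Rlt_dec as [_|L]; auto. exfalso; apply L, HN; lia. }
  intros P; induction P as [|P [k Hk]]; [exists O; lia|].
  destruct (Inc k) as [k' [L E]]. exists (S k'). rewrite E.
  pose proof (level_mono y k k' L); lia.
Qed.

Lemma wprod_weight_of_unbounded y : is_l2 y -> forall M, exists k, M <= wprod (weight_of y) k.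
Proof.
  intros Hy M. destruct (INR_unbounded M) as [P HP].
  destruct (level_unbounded y Hy P) as [k Hk]. exists k. rewrite wprod_weight_of.
  pose proof (INR_le_pow2 (level y k)). pose proof (le_INR _ _ Hk). lra.
Qed.

Lemma l2_open_tail_sq_neq m c : l2_open (fun y => is_l2 y /\ tail_sq m y <> c).
Proof.
  intros y [Hy Hc]. split; auto.
  destruct (tail_sq_same_side m y c Hy Hc) as [e [He Hs]].
  exists e. split; auto. intros z Hz Hd. split; auto.
  destruct (Hs z Hz Hd); lra.
Qed.

Lemma generic_Gdelta : l2_Gdelta generic.
Proof.
  exists (fun n y => is_l2 y /\ tail_sq (fst (of_nat n)) y <> thresh (snd (of_nat n))).
  split; [intros n; apply l2_open_tail_sq_neq|]. intros y; split.
  - intros [Hy H] n; split; auto.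
  - intros H. split; [apply (H O)|]. intros m p.
    pose proof (H (to_nat (m, p))) as [_ K]. rewrite cancel_of_to in K. exact K.
Qed.

Lemma weight_of_locally_const y : generic y -> forall n, exists eps, 0 < eps /\
  forall z, generic z -> l2_dist y z < eps ->
    level z n = level y n /\ forall i, (i < n)%nat -> weight_of z i = weight_of y i.
Proof.
  intros [Hy Hne] n. induction n as [|n [e1 [He1 IH]]].
  - exists 1. split; [lra|]. intros; split; auto; intros; lia.
  - destruct (tail_sq_same_side (S n) y (thresh (S (level y n))) Hy (Hne _ _)) as [e [He Hs]].
    exists (Rmin e1 e). split; [apply Rmin_pos; auto|].
    intros z Gz Hd.
    destruct (IH z Gz) as [El Ew]; [eapply Rlt_le_trans; [exact Hd | apply Rmin_l]|].
    assert (Wn : weight_of z n = weight_of y n /\ level z (S n) = level y (S n)).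
    { unfold weight_of; simpl. rewrite El.
      destruct (Hs z (proj1 Gz) (Rlt_le_trans _ _ _ Hd (Rmin_r _ _))) as [[A B]|[A B]];
        destruct Rlt_dec, Rlt_dec; split; auto; lra. }
    split; [tauto|]. intros i Hi.
    destruct (Nat.eq_dec i n); [subst; tauto | apply Ew; lia].
Qed.

Lemma weight_of_continuous : cont_G_to_Cantor generic weight_of.
Proof.
  intros y Gy n. destruct (weight_of_locally_const y Gy n) as [eps [He H]].
  exists eps. split; auto. intros z Gz Hd. apply (H z Gz Hd).
Qed.

(** * Density and separation *)

Definition set_coord (y : nat -> R) (n : nat) (t : R) : nat -> R :=
  fun i => if Nat.eq_dec i n then t else y i.

Definition trunc (x : nat -> R) (n : nat) : nat -> R :=
  fun i => if Nat.ltb i n then x i else 0.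

Lemma set_coord_supp y n t : (forall i, (n <= i)%nat -> y i = 0) ->
  forall i, (S n <= i)%nat -> set_coord y n t i = 0.
Proof. intros H i Hi; unfold set_coord; destruct Nat.eq_dec; [lia | apply H; lia]. Qed.

Lemma trunc_supp x n i : (n <= i)%nat -> trunc x n i = 0.
Proof. intros Hi; unfold trunc. destruct (Nat.ltb_spec i n); [lia | auto]. Qed.

Lemma tail_sq_set_coord y n t m : (forall i, (n <= i)%nat -> y i = 0) -> (m <= n)%nat ->
  tail_sq m (set_coord y n t) = psum (fun i => y (m + i)%nat ^ 2) (n - m) + t ^ 2.
Proof.
  intros H Hm. rewrite (tail_sq_finsupp _ (S n)) by (apply set_coord_supp; auto).
  replace (S n - m)%nat with (S (n - m)) by lia. simpl psum. f_equal.
  - apply psum_ext. intros i Hi. unfold set_coord; destruct Nat.eq_dec; [lia | auto].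
  - unfold set_coord; destruct Nat.eq_dec; [auto | lia].
Qed.

Lemma tail_sq_set_coord_beyond y n t m : (forall i, (n <= i)%nat -> y i = 0) -> (n < m)%nat ->
  tail_sq m (set_coord y n t) = 0.
Proof.
  intros H Hm. rewrite (tail_sq_finsupp _ (S n)) by (apply set_coord_supp; auto).
  replace (S n - m)%nat with O by lia. auto.
Qed.

Lemma subinterval_avoiding (l : list R) a b : a < b ->
  exists a' b', a <= a' /\ a' < b' /\ b' <= b /\ forall r, In r l -> ~ (a' < r < b').
Proof.
  intros Hab. induction l as [|r l (a1 & b1 & H1 & H2 & H3 & H4)].
  - exists a, b. repeat split; auto; lra.
  - destruct (classic (a1 < r < b1)) as [In|Out].
    + exists a1, r. repeat split; try lra.
      intros r' [<-|Hr'] C; [lra | apply (H4 r' Hr'); lra].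
    + exists a1, b1. repeat split; auto. intros r' [<-|Hr']; auto.
Qed.

Lemma point_avoiding (l : list R) a b : a < b -> exists t, a < t < b /\ ~ In t l.
Proof.
  intros Hab. destruct (subinterval_avoiding l a b Hab) as (a' & b' & H1 & H2 & H3 & H4).
  exists ((a' + b') / 2). split; [lra|]. intros C. apply (H4 _ C). lra.
Qed.

(* For [t > a] a tail of [set_coord y n t] can only hit one of the finitely many thresholds
   above [a^2], each for a single value of [t]. *)
Lemma set_coord_generic y n a b : (forall i, (n <= i)%nat -> y i = 0) -> 0 < a < b ->
  exists t, a < t < b /\ generic (set_coord y n t).
Proof.
  intros H Hab. destruct (thresh_below (a ^ 2) ltac:(apply pow_lt; lra)) as [K HK].
  set (c := fun m => psum (fun i => y (m + i)%nat ^ 2) (n - m)).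
  destruct (point_avoiding
    (flat_map (fun m => map (fun p => sqrt (thresh p - c m)) (seq 0 K)) (seq 0 (S n)))
    a b ltac:(lra)) as [t [Ht Hav]].
  exists t; split; auto. split; [apply (is_l2_finsupp _ (S n)), set_coord_supp; auto|].
  intros m p. destruct (Compare_dec.le_lt_dec m n) as [Hm|Hm].
  - rewrite tail_sq_set_coord by auto. fold (c m). intros E.
    assert (0 <= c m) by (apply psum_ge0; intros; apply pow2_ge_0).
    destruct (Compare_dec.le_lt_dec K p) as [Hp|Hp].
    + pose proof (thresh_antimono K p Hp). assert (a ^ 2 < t ^ 2) by nra.
      lra.
    + apply Hav, in_flat_map. exists m. split; [apply in_seq; lia|].
      apply in_map_iff. exists p. split; [|apply in_seq; lia].
      rewrite <- E. replace (c m + t ^ 2 - c m) with (t ^ 2) by ring. apply sqrt_pow2; lra.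
  - rewrite tail_sq_set_coord_beyond by auto. pose proof (thresh_pos p); lra.
Qed.

Lemma dist2_trunc_set_coord x n t : is_l2 x ->
  dist2 x (set_coord (trunc x n) n t) <= 2 * tail_sq n x + 2 * t ^ 2.
Proof.
  intros Hx. set (v := set_coord (trunc x n) n t).
  assert (Hv : is_l2 v) by (apply (is_l2_finsupp _ (S n)), set_coord_supp, trunc_supp).
  unfold dist2. rewrite (Series_split _ n) by (apply ex_dist2; auto).
  rewrite psum_eq0, Rplus_0_l.
  2: { intros i Hi. unfold v, set_coord, trunc.
       destruct Nat.eq_dec; [lia|]. destruct (Nat.ltb_spec i n); [ring | lia]. }
  rewrite Series_incr_1 by (apply (ex_series_incr_n (fun i => (x i - v i) ^ 2)), ex_dist2; auto).
  rewrite (Series_ext _ (fun k => x (S n + k)%nat ^ 2)).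
  2: { intros k. unfold v. rewrite set_coord_supp by (auto using trunc_supp; lia). ring_simplify.
       do 2 f_equal; lia. }
  fold (tail_sq (S n) x). rewrite (tail_sq_S n x Hx), Nat.add_0_r.
  unfold v, set_coord. destruct Nat.eq_dec; [|lia].
  replace (x n - t) with (x n + - t) by ring.
  pose proof (sq_add_le (x n) (- t)). pose proof (tail_sq_ge0 (S n) x).
  replace ((- t) ^ 2) with (t ^ 2) in * by ring. lra.
Qed.

Lemma generic_finsupp_dense x : is_l2 x -> forall eps, 0 < eps ->
  exists n v, generic v /\ (forall i, (n <= i)%nat -> v i = 0) /\ dist2 x v < eps.
Proof.
  intros Hx eps He. destruct (tail_sq_vanishes x Hx (eps / 4) ltac:(lra)) as [n Hn].
  specialize (Hn n ltac:(lia)).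
  set (b := sqrt (eps / 4)). assert (Hb : 0 < b) by (apply sqrt_lt_R0; lra).
  destruct (set_coord_generic (trunc x n) n (b / 2) b (fun i => trunc_supp x n i) ltac:(lra))
    as [t [Ht Gv]].
  exists (S n), (set_coord (trunc x n) n t). split; [auto|split].
  - apply set_coord_supp, trunc_supp.
  - eapply Rle_lt_trans; [apply dist2_trunc_set_coord; auto|].
    assert (t ^ 2 < eps / 4).
    { rewrite <- (pow2_sqrt (eps / 4)) by lra. fold b. nra. }
    lra.
Qed.

Lemma generic_dense : l2_dense generic.
Proof.
  split; [intros x [H _]; auto|]. intros x Hx eps He.
  destruct (generic_finsupp_dense x Hx (eps ^ 2) (pow_lt eps 2 He)) as (n & v & Gv & _ & Hd).
  exists v. split; auto. apply l2_dist_lt; auto.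
Qed.

Lemma dist2_set_coord v N s : (forall i, (N <= i)%nat -> v i = 0) ->
  dist2 v (set_coord v N s) = s ^ 2.
Proof.
  intros HvN.
  assert (Hsupp : forall i, (S N <= i)%nat -> (v i - set_coord v N s i) ^ 2 = 0)
    by (intros i Hi; unfold set_coord; destruct Nat.eq_dec; [lia | ring]).
  unfold dist2. rewrite (proj2 (Series_finsupp _ (S N) Hsupp)). simpl psum.
  rewrite psum_eq0 by (intros i Hi; unfold set_coord; destruct Nat.eq_dec; [lia | ring]).
  unfold set_coord. destruct Nat.eq_dec; [|lia]. rewrite HvN by lia. ring.
Qed.

Lemma weight_of_set_coord_neq v N s : is_l2 v -> (forall i, (N <= i)%nat -> v i = 0) ->
  s ^ 2 <= 1 -> tail_sq 0 v + 1 < 4 ^ level v N * s ^ 2 ->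
  weight_of v <> weight_of (set_coord v N s).
Proof.
  intros Hv HvN Hs Hbig E. set (y := set_coord v N s) in *.
  assert (Hy : is_l2 y) by (apply (is_l2_finsupp _ (S N)), set_coord_supp; auto).
  assert (Ty0 : tail_sq 0 y = tail_sq 0 v + s ^ 2).
  { unfold y. rewrite tail_sq_set_coord, (tail_sq_finsupp v N 0) by (auto; lia). auto. }
  assert (TyN : tail_sq N y = s ^ 2).
  { unfold y. rewrite tail_sq_set_coord, Nat.sub_diag by auto. simpl; ring. }
  pose proof (level_tail_bound y N Hy) as B.
  rewrite <- (level_of_weight_of v y E), TyN, Ty0 in B.
  pose proof (tail_sq_ge0 0 v). pose proof (Rmax_lub (tail_sq 0 v + s ^ 2) 1 (tail_sq 0 v + 1)).
  lra.
Qed.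

Lemma weight_of_separates U : l2_open U -> (exists u, U u) ->
  exists y1 y2, U y1 /\ generic y1 /\ U y2 /\ generic y2 /\ weight_of y1 <> weight_of y2.
Proof.
  intros HU [u Hu]. destruct (HU u Hu) as [Hul [r [Hr Hball]]].
  assert (Hr2 : 0 < r ^ 2) by (apply pow_lt; lra).
  destruct (generic_finsupp_dense u Hul (r ^ 2 / 8) ltac:(lra)) as (n & v & Gv & Hvn & Huv).
  set (b := Rmin 1 (r / 4)). set (a := b / 2).
  assert (Hb : 0 < b <= 1) by (split; [apply Rmin_pos | apply Rmin_l]; lra).
  assert (Ha : 0 < a < b) by (unfold a; lra).
  assert (Ha2 : 0 < a ^ 2) by (apply pow_lt; lra).
  destruct (wprod_weight_of_unbounded v (proj1 Gv) ((tail_sq 0 v + 2) / a ^ 2)) as [k Hk].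
  rewrite wprod_weight_of in Hk.
  set (N := Nat.max k n).
  assert (HvN : forall i, (N <= i)%nat -> v i = 0) by (intros; apply Hvn; lia).
  destruct (set_coord_generic v N a b HvN ltac:(lra)) as [s [Hs Gy]].
  assert (Hs2 : a ^ 2 <= s ^ 2 <= b ^ 2) by (split; apply pow_incr; lra).
  assert (Hb2 : b ^ 2 <= r ^ 2 / 16).
  { replace (r ^ 2 / 16) with ((r / 4) ^ 2) by field. apply pow_incr; split; [lra | apply Rmin_r]. }
  exists v, (set_coord v N s). split; [|split; [auto | split; [|split; [auto|]]]].
  - apply Hball; [apply Gv | apply l2_dist_lt; auto; lra].
  - apply Hball; [apply Gy | apply l2_dist_lt; auto].
    pose proof (dist2_triangle u v _ Hul (proj1 Gv) (proj1 Gy)).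
    rewrite dist2_set_coord in * by auto. lra.
  - apply weight_of_set_coord_neq; auto; [apply Gv | nra |].
    assert (Hlev : (tail_sq 0 v + 2) / a ^ 2 <= 4 ^ level v N).
    { eapply Rle_trans; [exact Hk|]. rewrite four_pow.
      assert (1 <= 2 ^ level v k) by (apply pow_R1_Rle; lra).
      assert (2 ^ level v k <= 2 ^ level v N) by (apply Rle_pow; [lra | apply level_mono; lia]).
      nra. }
    apply Rlt_le_trans with ((tail_sq 0 v + 2) / a ^ 2 * a ^ 2).
    + replace ((tail_sq 0 v + 2) / a ^ 2 * a ^ 2) with (tail_sq 0 v + 2) by (field; lra). lra.
    + apply Rmult_le_compat; [| | exact Hlev | lra]; [|nra].
      apply Rdiv_le_0_compat; [pose proof (tail_sq_ge0 0 v) |]; lra.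
Qed.

Theorem lemma5 :
  exists (G : (nat -> R) -> Prop) (f : (nat -> R) -> nat -> R),
    l2_dense G /\ l2_Gdelta G /\
    (forall y, G y -> weight12 (f y)) /\
    cont_G_to_Cantor G f /\
    (forall y, G y -> ~ HC (f y) y) /\
    (forall y, G y -> exists x, HC (f y) x) /\
    (forall U, l2_open U -> (exists u, U u) ->
       exists y1 y2, U y1 /\ G y1 /\ U y2 /\ G y2 /\ f y1 <> f y2).
Proof.
  exists generic, weight_of.
  split; [apply generic_dense|]. split; [apply generic_Gdelta|].
  split; [intros y _; apply weight_of_12|]. split; [apply weight_of_continuous|].
  split; [intros y [Hy _]; apply not_HC_weight_of, Hy|].
  split; [|apply weight_of_separates].
  intros y [Hy _]. apply HC_exists_of_unbounded;
    [apply weight_of_12 | apply wprod_weight_of_unbounded, Hy].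
Qed.
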